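(* Let $A$ be a Banach algebra which does not consist entirely of right (resp. left) topological divisors of zero. If $A$ has a left (resp. right) approximate identity (not necessarily bounded), then $A$ has a left (resp. right) unit. In particular, if moreover $A$ is commutative, then $A$ is unital. *)

From Stdlib Require Import Reals.
Open Scope R_scope.

Record BanachAlgebra := {
  ba_car :> Type;
  ba_zero : ba_car;
  ba_add : ba_car -> ba_car -> ba_car;
  ba_opp : ba_car -> ba_car;
  ba_scal : R -> ba_car -> ba_car;
  ba_mul : ba_car -> ba_car -> ba_car;
  ba_norm : ba_car -> R;
  ba_addA : forall x y z, ba_add x (ba_add y z) = ba_add (ba_add x y) z;
  ba_addC : forall x y, ba_add x y = ba_add y x;
  ba_add0 : forall x, ba_add ba_zero x = x;
  ba_addN : forall x, ba_add x (ba_opp x) = ba_zero;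
  ba_scalA : forall a b x, ba_scal a (ba_scal b x) = ba_scal (a * b) x;
  ba_scal1 : forall x, ba_scal 1 x = x;
  ba_scalDr : forall a x y, ba_scal a (ba_add x y) = ba_add (ba_scal a x) (ba_scal a y);
  ba_scalDl : forall a b x, ba_scal (a + b) x = ba_add (ba_scal a x) (ba_scal b x);
  ba_mulA : forall x y z, ba_mul x (ba_mul y z) = ba_mul (ba_mul x y) z;
  ba_mulDl : forall x y z, ba_mul (ba_add x y) z = ba_add (ba_mul x z) (ba_mul y z);
  ba_mulDr : forall x y z, ba_mul x (ba_add y z) = ba_add (ba_mul x y) (ba_mul x z);
  ba_mulZl : forall a x y, ba_mul (ba_scal a x) y = ba_scal a (ba_mul x y);
  ba_mulZr : forall a x y, ba_mul x (ba_scal a y) = ba_scal a (ba_mul x y);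
  ba_norm_ge0 : forall x, 0 <= ba_norm x;
  ba_norm_eq0 : forall x, ba_norm x = 0 -> x = ba_zero;
  ba_norm_triangle : forall x y, ba_norm (ba_add x y) <= ba_norm x + ba_norm y;
  ba_normZ : forall a x, ba_norm (ba_scal a x) = Rabs a * ba_norm x;
  ba_norm_mul : forall x y, ba_norm (ba_mul x y) <= ba_norm x * ba_norm y;
  ba_complete : forall u : nat -> ba_car,
    (forall eps, eps > 0 -> exists N, forall n m, (n >= N)%nat -> (m >= N)%nat ->
        ba_norm (ba_add (u n) (ba_opp (u m))) < eps) ->
    exists l, forall eps, eps > 0 -> exists N, forall n, (n >= N)%nat ->
        ba_norm (ba_add (u n) (ba_opp l)) < eps
}.

Section Defs.
Variable A : BanachAlgebra.

Definition ba_sub (x y : A) : A := ba_add A x (ba_opp A y).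

Definition seq_to0 (u : nat -> A) : Prop :=
  forall eps, eps > 0 -> exists N, forall n, (n >= N)%nat -> ba_norm A (u n) < eps.

Definition right_tdz (a : A) : Prop :=
  exists x : nat -> A, (forall n, ba_norm A (x n) = 1) /\ seq_to0 (fun n => ba_mul A (x n) a).

Definition left_tdz (a : A) : Prop :=
  exists x : nat -> A, (forall n, ba_norm A (x n) = 1) /\ seq_to0 (fun n => ba_mul A a (x n)).

End Defs.

Definition directed {I : Type} (le : I -> I -> Prop) : Prop :=
  inhabited I /\ (forall i, le i i) /\
  (forall i j k, le i j -> le j k -> le i k) /\
  (forall i j, exists k, le i k /\ le j k).

Definition net_lim (A : BanachAlgebra) {I : Type} (le : I -> I -> Prop)
  (f : I -> A) (l : A) : Prop :=
  forall eps, eps > 0 -> exists i0, forall i, le i0 i -> ba_norm A (ba_sub A (f i) l) < eps.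

Definition has_left_approx_id (A : BanachAlgebra) : Prop :=
  exists (I : Type) (le : I -> I -> Prop) (e : I -> A),
    directed le /\ forall x : A, net_lim A le (fun i => ba_mul A (e i) x) x.

Definition has_right_approx_id (A : BanachAlgebra) : Prop :=
  exists (I : Type) (le : I -> I -> Prop) (e : I -> A),
    directed le /\ forall x : A, net_lim A le (fun i => ba_mul A x (e i)) x.

Definition has_left_unit (A : BanachAlgebra) : Prop :=
  exists e : A, forall x : A, ba_mul A e x = x.

Definition has_right_unit (A : BanachAlgebra) : Prop :=
  exists e : A, forall x : A, ba_mul A x e = x.

Definition is_unital (A : BanachAlgebra) : Prop :=
  exists e : A, forall x : A, ba_mul A e x = x /\ ba_mul A x e = x.

Definition is_commutative (A : BanachAlgebra) : Prop :=
  forall x y : A, ba_mul A x y = ba_mul A y x.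

(** A right multiplication [x |-> x a] by an element [a] that is not a right
    topological divisor of zero is bounded below, [c ‖x‖ <= ‖x a‖].  Since
    [e_i a -> a], the net [e_i a] is Cauchy, hence so is [(e_i)] itself, and by
    completeness [e_i -> e] in norm.  Then [e_i x -> e x] by continuity while
    [e_i x -> x] by hypothesis, so [e x = x].  The right-handed statement is
    the same argument in the opposite algebra. *)

From Stdlib Require Import Reals Lra Lia Classical IndefiniteDescription.
Open Scope R_scope.

Lemma inv_succ_lt (eps : R) :
  0 < eps -> exists N : nat, forall n, (n >= N)%nat -> / INR (S n) < eps.
Proof.
  intro Heps. destruct (archimed_cor1 eps Heps) as [N [HN HN_pos]].
  exists N. intros n Hn. eapply Rle_lt_trans; [|exact HN].
  apply Rinv_le_contravar; [apply lt_0_INR; lia | apply le_INR; lia].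
Qed.

Lemma inv_succ_gt0 (n : nat) : 0 < / INR (S n).
Proof. apply Rinv_0_lt_compat, lt_0_INR; lia. Qed.

Section BanachAlgebraFacts.

Variable A : BanachAlgebra.

Local Notation "x ⊖ y" := (ba_sub A x y) (at level 50, left associativity).
Local Notation "x ⋅ y" := (ba_mul A x y) (at level 40, left associativity).

Lemma ba_add_cancel (x y z : A) : ba_add A x y = ba_add A x z -> y = z.
Proof.
  intro H.
  assert (K : forall w : A, ba_add A (ba_opp A x) (ba_add A x w) = w).
  { intro w. rewrite ba_addA, (ba_addC A (ba_opp A x)), ba_addN, ba_add0. reflexivity. }
  rewrite <- (K y), <- (K z), H. reflexivity.
Qed.

Lemma ba_addr0 (x : A) : ba_add A x (ba_zero A) = x.
Proof. rewrite ba_addC. apply ba_add0. Qed.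

Lemma ba_scal0 (x : A) : ba_scal A 0 x = ba_zero A.
Proof.
  apply (ba_add_cancel (ba_scal A 0 x)).
  rewrite ba_addr0, <- ba_scalDl, Rplus_0_r. reflexivity.
Qed.

Lemma ba_opp_scal (x : A) : ba_opp A x = ba_scal A (-1) x.
Proof.
  apply (ba_add_cancel x). rewrite ba_addN.
  rewrite <- (ba_scal1 A x) at 1. rewrite <- ba_scalDl.
  replace (1 + -1) with 0 by ring. rewrite ba_scal0. reflexivity.
Qed.

Lemma ba_norm_sub_sym (x y : A) : ba_norm A (x ⊖ y) = ba_norm A (y ⊖ x).
Proof.
  assert (Hopp : ba_opp A (x ⊖ y) = y ⊖ x).
  { unfold ba_sub. rewrite !ba_opp_scal, ba_scalDr, ba_scalA, ba_addC.
    replace (-1 * -1) with 1 by ring. rewrite ba_scal1. reflexivity. }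
  rewrite <- Hopp, ba_opp_scal, ba_normZ, Rabs_left by lra. ring.
Qed.

Lemma ba_norm_sub_triangle (x y z : A) :
  ba_norm A (x ⊖ z) <= ba_norm A (x ⊖ y) + ba_norm A (y ⊖ z).
Proof.
  replace (x ⊖ z) with (ba_add A (x ⊖ y) (y ⊖ z)); [apply ba_norm_triangle|].
  unfold ba_sub. rewrite <- ba_addA, (ba_addA A (ba_opp A y)).
  rewrite (ba_addC A (ba_opp A y) y), ba_addN, ba_add0. reflexivity.
Qed.

Lemma ba_mul_subl (x y z : A) : (x ⊖ y) ⋅ z = x ⋅ z ⊖ y ⋅ z.
Proof. unfold ba_sub. rewrite ba_mulDl, !ba_opp_scal, ba_mulZl. reflexivity. Qed.

Lemma ba_norm_sub_eq0 (x y : A) : ba_norm A (x ⊖ y) = 0 -> x = y.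
Proof.
  intro H. apply ba_norm_eq0 in H. unfold ba_sub in H.
  assert (E : ba_add A (ba_add A x (ba_opp A y)) y = x).
  { rewrite <- ba_addA, (ba_addC A (ba_opp A y)), ba_addN, ba_addr0. reflexivity. }
  rewrite H, ba_add0 in E. auto.
Qed.

Lemma not_right_tdz_bounded_below (a : A) :
  ~ right_tdz A a -> exists c, c > 0 /\ forall x : A, c * ba_norm A x <= ba_norm A (x ⋅ a).
Proof.
  intro Ha. apply NNPP. intro Hnot.
  assert (Hsmall : forall n : nat, exists x : A, ba_norm A (x ⋅ a) < / INR (S n) * ba_norm A x).
  { intro n. apply NNPP. intro Hm. apply Hnot. exists (/ INR (S n)).
    split; [apply inv_succ_gt0|]. intro x. apply Rnot_lt_le. intro Hl.
    apply Hm. exists x. exact Hl. }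
  destruct (functional_choice _ Hsmall) as [x Hx].
  assert (Hpos : forall n, 0 < ba_norm A (x n)).
  { intro n. specialize (Hx n).
    pose proof (ba_norm_ge0 A (x n ⋅ a)). pose proof (ba_norm_ge0 A (x n)).
    destruct (Req_dec (ba_norm A (x n)) 0) as [E|E]; [rewrite E in Hx|]; lra. }
  apply Ha. exists (fun n => ba_scal A (/ ba_norm A (x n)) (x n)). split.
  - intro n. specialize (Hpos n).
    rewrite ba_normZ, Rabs_pos_eq by (apply Rlt_le, Rinv_0_lt_compat; lra).
    field. lra.
  - intros eps Heps. destruct (inv_succ_lt eps Heps) as [N HN].
    exists N. intros n Hn. specialize (Hpos n). specialize (HN n Hn).
    rewrite ba_mulZl, ba_normZ, Rabs_pos_eq by (apply Rlt_le, Rinv_0_lt_compat; lra).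
    apply Rlt_trans with (/ INR (S n)); [|exact HN].
    apply (Rmult_lt_reg_l (ba_norm A (x n))); [exact Hpos|].
    rewrite <- Rmult_assoc, Rinv_r, Rmult_1_l by lra.
    rewrite Rmult_comm. exact (Hx n).
Qed.

Section Nets.

Variables (I : Type) (le : I -> I -> Prop).

Definition net_cauchy (f : I -> A) : Prop :=
  forall eps, eps > 0 -> exists i0, forall i j, le i0 i -> le i0 j -> ba_norm A (f i ⊖ f j) < eps.

Lemma net_lim_cauchy (f : I -> A) (l : A) : net_lim A le f l -> net_cauchy f.
Proof.
  intros Hf eps Heps. destruct (Hf (eps / 2)) as [i0 Hi0]; [lra|].
  exists i0. intros i j Hi Hj.
  pose proof (ba_norm_sub_triangle (f i) l (f j)) as Htri.
  rewrite (ba_norm_sub_sym l) in Htri.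
  pose proof (Hi0 i Hi). pose proof (Hi0 j Hj). lra.
Qed.

Lemma net_cauchy_of_mulr_bounded_below (f : I -> A) (a : A) (c : R) :
  c > 0 -> (forall x : A, c * ba_norm A x <= ba_norm A (x ⋅ a)) ->
  net_cauchy (fun i => f i ⋅ a) -> net_cauchy f.
Proof.
  intros Hc Hb Hf eps Heps. destruct (Hf (c * eps)) as [i0 Hi0]; [nra|].
  exists i0. intros i j Hi Hj. specialize (Hi0 i j Hi Hj).
  specialize (Hb (f i ⊖ f j)). rewrite ba_mul_subl in Hb.
  apply (Rmult_lt_reg_l c); lra.
Qed.

Lemma net_lim_mulr (f : I -> A) (l x : A) :
  net_lim A le f l -> net_lim A le (fun i => f i ⋅ x) (l ⋅ x).
Proof.
  intros Hf eps Heps. set (M := ba_norm A x + 1).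
  assert (HM : 0 < M) by (pose proof (ba_norm_ge0 A x); unfold M; lra).
  destruct (Hf (eps / M)) as [i0 Hi0]; [apply Rdiv_lt_0_compat; lra|].
  exists i0. intros i Hi. specialize (Hi0 i Hi).
  rewrite <- ba_mul_subl. eapply Rle_lt_trans; [apply ba_norm_mul|].
  pose proof (ba_norm_ge0 A (f i ⊖ l)).
  apply Rle_lt_trans with (ba_norm A (f i ⊖ l) * M).
  - apply Rmult_le_compat_l; unfold M; lra.
  - apply (Rmult_lt_compat_r M) in Hi0; [|lra].
    replace (eps / M * M) with eps in Hi0 by (field; lra). exact Hi0.
Qed.

Hypothesis Hdir : directed le.

Lemma net_lim_unique (f : I -> A) (l1 l2 : A) :
  net_lim A le f l1 -> net_lim A le f l2 -> l1 = l2.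
Proof.
  destruct Hdir as [_ [_ [_ Hjoin]]]. intros H1 H2.
  apply ba_norm_sub_eq0.
  pose proof (ba_norm_ge0 A (l1 ⊖ l2)).
  destruct (Req_dec (ba_norm A (l1 ⊖ l2)) 0) as [E|E]; [exact E|].
  set (eps := ba_norm A (l1 ⊖ l2) / 2).
  destruct (H1 eps) as [i1 Hi1]; [unfold eps; lra|].
  destruct (H2 eps) as [i2 Hi2]; [unfold eps; lra|].
  destruct (Hjoin i1 i2) as [i [Hi1i Hi2i]].
  pose proof (ba_norm_sub_triangle l1 (f i) l2) as Htri.
  rewrite (ba_norm_sub_sym l1 (f i)) in Htri.
  specialize (Hi1 i Hi1i). specialize (Hi2 i Hi2i). unfold eps in *. lra.
Qed.

Lemma net_cauchy_converges (f : I -> A) : net_cauchy f -> exists l, net_lim A le f l.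
Proof.
  destruct Hdir as [_ [Hrefl [_ Hjoin]]]. intro Hf.
  destruct (functional_choice _ (fun n => Hf (/ INR (S n)) (inv_succ_gt0 n)))
    as [k Hk].
  (* The indices [k n] need not increase: [f (k n)] and [f (k m)] are compared
     through [f i] at a common upper bound [i]. *)
  destruct (ba_complete A (fun n => f (k n))) as [l Hl].
  { intros eps Heps. destruct (inv_succ_lt (eps / 2)) as [N HN]; [lra|].
    exists N. intros n m Hn Hm. destruct (Hjoin (k n) (k m)) as [i [Hni Hmi]].
    pose proof (Hk n (k n) i (Hrefl _) Hni). pose proof (Hk m i (k m) Hmi (Hrefl _)).
    pose proof (ba_norm_sub_triangle (f (k n)) (f i) (f (k m))).
    pose proof (HN n Hn). pose proof (HN m Hm). unfold ba_sub in *. lra. }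
  exists l. intros eps Heps.
  destruct (inv_succ_lt (eps / 2)) as [N1 HN1]; [lra|].
  destruct (Hl (eps / 2)) as [N2 HN2]; [lra|].
  set (n := max N1 N2). exists (k n). intros i Hi.
  pose proof (Hk n i (k n) Hi (Hrefl _)).
  pose proof (ba_norm_sub_triangle (f i) (f (k n)) l).
  specialize (HN1 n ltac:(unfold n; lia)). specialize (HN2 n ltac:(unfold n; lia)).
  unfold ba_sub in *. lra.
Qed.

End Nets.

Lemma left_unit_of_left_approx_id :
  (exists a : A, ~ right_tdz A a) -> has_left_approx_id A -> has_left_unit A.
Proof.
  intros [a Ha] [I [le [e [Hdir He]]]].
  destruct (not_right_tdz_bounded_below a Ha) as [c [Hc Hb]].
  assert (Hcauchy : net_cauchy I le e).
  { apply (net_cauchy_of_mulr_bounded_below I le e a c Hc Hb).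
    exact (net_lim_cauchy I le _ a (He a)). }
  destruct (net_cauchy_converges I le Hdir e Hcauchy) as [u Hu].
  exists u. intro x.
  exact (net_lim_unique I le Hdir _ _ _ (net_lim_mulr I le e u x Hu) (He x)).
Qed.

End BanachAlgebraFacts.

Definition opposite_algebra (A : BanachAlgebra) : BanachAlgebra.
Proof.
  refine {| ba_car := ba_car A; ba_zero := ba_zero A; ba_add := ba_add A;
            ba_opp := ba_opp A; ba_scal := ba_scal A;
            ba_mul := fun x y => ba_mul A y x; ba_norm := ba_norm A |}.
  - apply ba_addA. - apply ba_addC. - apply ba_add0. - apply ba_addN.
  - apply ba_scalA. - apply ba_scal1. - apply ba_scalDr. - apply ba_scalDl.
  - intros. symmetry. apply ba_mulA.
  - intros. apply ba_mulDr. - intros. apply ba_mulDl.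
  - intros. apply ba_mulZr. - intros. apply ba_mulZl.
  - apply ba_norm_ge0. - apply ba_norm_eq0. - apply ba_norm_triangle.
  - apply ba_normZ. - intros. rewrite Rmult_comm. apply ba_norm_mul.
  - apply ba_complete.
Defined.

Theorem mainTheorem5 (A : BanachAlgebra) :
  ((exists a : A, ~ right_tdz A a) -> has_left_approx_id A -> has_left_unit A) /\
  ((exists a : A, ~ left_tdz A a) -> has_right_approx_id A -> has_right_unit A) /\
  (is_commutative A -> (exists a : A, ~ right_tdz A a) ->
     has_left_approx_id A -> is_unital A).
Proof.
  split; [|split].
  - apply left_unit_of_left_approx_id.
  - exact (left_unit_of_left_approx_id (opposite_algebra A)).
  - intros Hcomm Ha He. destruct (left_unit_of_left_approx_id A Ha He) as [u Hu].
    exists u. intro x. split; [|rewrite Hcomm]; apply Hu.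
Qed.
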